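(* Let $\mathfrak{F}=(F;+,\cdot,<)$ be an ordered field whose theory is dp-small, and let $v:F^\times\to\Gamma$ be the archimedean valuation on $F$. Then the value group $\Gamma$ is divisible.
   Context: The archimedean valuation $v$ on an ordered field $F$ is the valuation whose valuation ring is the convex hull of the prime field, i.e. $v(a)\ge0$ iff $|a|<n$ for some $n\in\mathbb{N}$. For a complete theory $T$ in language $L$ with monster model $\mathcal{U}$ ($\mathcal{U}_y$ the $|y|$-tuples from $\mathcal{U}$): a partial type $\pi(x)$ is dp-small if there do not exist $L(\mathcal{U})$-formulas $\varphi_i(x)$ ($i<\omega$), an $L$-formula $\psi(x;y)$ and $b_j\in\mathcal{U}_y$ ($j<\omega$) such that for all $i_0,j_0<\omega$ the type $\pi(x)\cup\{\varphi_{i_0}(x),\psi(x;b_{j_0})\}\cup\{\neg\varphi_i(x): i\ne i_0\}\cup\{\neg\psi(x;b_j): j\neq j_0\}$ is consistent. $T$ is dp-small if $x=x$ is dp-small for $x$ a single variable. *)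

From mathcomp Require Import all_boot all_order all_algebra.
Set Implicit Arguments. Unset Strict Implicit. Unset Printing Implicit Defensive.
Import Order.TTheory GRing.Theory Num.Theory.
Local Open Scope ring_scope.

Inductive term : Type :=
  | TVar of nat
  | TZero | TOne
  | TAdd of term & term
  | TOpp of term
  | TMul of term & term.

Inductive formula : Type :=
  | FEq of term & term
  | FLt of term & term
  | FNeg of formula
  | FAnd of formula & formula
  | FEx of nat & formula.

Definition upd (K : Type) (e : nat -> K) (i : nat) (a : K) : nat -> K :=
  fun j => if j == i then a else e j.

Fixpoint eval_term (K : realFieldType) (e : nat -> K) (t : term) : K :=
  match t with
  | TVar i => e i
  | TZero => 0
  | TOne => 1
  | TAdd s u => eval_term e s + eval_term e u
  | TOpp s => - eval_term e s
  | TMul s u => eval_term e s * eval_term e u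
  end.

Fixpoint holds (K : realFieldType) (e : nat -> K) (f : formula) : Prop :=
  match f with
  | FEq s u => eval_term e s = eval_term e u
  | FLt s u => eval_term e s < eval_term e u
  | FNeg g => ~ holds e g
  | FAnd g h => holds e g /\ holds e h
  | FEx i g => exists a : K, holds (upd e i a) g
  end.

Definition elementary (K K' : realFieldType) (h : K -> K') : Prop :=
  forall (f : formula) (e : nat -> K), holds e f <-> holds (h \o e) f.

(* An L(K)-formula in the single free variable x (= variable 0) is a pair
   (f, e): an L-formula f together with an assignment e of parameters from K
   to its other variables (the value of e at 0 is ignored). *)
Definition lkformula (K : realFieldType) : Type := (formula * (nat -> K))%type.

Definition sat1 (K : realFieldType) (a : K) (p : lkformula K) : Prop :=
  holds (upd p.2 0 a) p.1.

Definition consistent (K : realFieldType) (Sigma : lkformula K -> Prop) : Prop :=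
  exists (K' : realFieldType) (h : K -> K'), elementary h /\
    exists a : K', forall p, Sigma p -> sat1 a (p.1, h \o p.2).

(* The type  {phi_{i0}(x), psi(x;b_{j0})} u {~phi_i(x) : i<>i0}
   u {~psi(x;b_j) : j<>j0}   (pi(x) is x = x, hence omitted). *)
Definition dp_pattern_type (K : realFieldType) (phi : nat -> lkformula K)
  (psi : formula) (b : nat -> (nat -> K)) (i0 j0 : nat) : lkformula K -> Prop :=
  fun p => p = phi i0 \/ p = (psi, b j0)
        \/ (exists i, i <> i0 /\ p = (FNeg (phi i).1, (phi i).2))
        \/ (exists j, j <> j0 /\ p = (FNeg psi, b j)).

(* Th(F) is dp-small: no such pattern with parameters from any elementary
   extension of F (playing the role of the monster model). *)
Definition dp_small (F : realFieldType) : Prop :=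
  ~ exists (K : realFieldType) (h : F -> K), elementary h /\
      exists (phi : nat -> lkformula K) (psi : formula) (b : nat -> (nat -> K)),
        forall i0 j0 : nat, consistent (dp_pattern_type phi psi b i0 j0).

(* Archimedean valuation: valuation ring = convex hull of the prime field. *)
Definition arch_finite (F : realFieldType) (a : F) : Prop :=
  exists n : nat, `|a| < n%:R.

(* v a = v b  (for a, b nonzero) iff a/b is a unit of the valuation ring *)
Definition arch_val_eq (F : realFieldType) (a b : F) : Prop :=
  arch_finite (a / b) /\ arch_finite (b / a).

(* If some c > 1 were not an n-th power, the cosets c^(n^i) (F^x)^(n^(i+1)),
   i in N, would be pairwise disjoint: equal elements of two of them give, after
   extracting roots, c = w^n.  They are the instances of one formula with
   parameter c^(n^i).  In a countable ultrapower of F, the windows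
   (c^(2jk), c^((2j+1)k))_k are pairwise disjoint intervals each of which meets
   every coset, because their length in the exponent k is unbounded.  Cosets and
   windows form the array forbidden by dp-smallness.  Hence every positive
   element of a dp-small ordered field is an n-th power, and v(a) = n v(b) for
   any b with b^n = |a|. *)

From HB Require Import structures.
From mathcomp Require Import all_boot all_order all_algebra.
From mathcomp Require Import boolp classical_sets functions filter zify.
Set Implicit Arguments. Unset Strict Implicit. Unset Printing Implicit Defensive.
Import Order.TTheory GRing.Theory Num.Theory.
Local Open Scope ring_scope.
Local Open Scope quotient_scope.

Lemma ultra_nearN {T : Type} {U : set_system T} {U_ultra : UltraFilter U} (P : set T) :
  (~ \forall k \near U, P k) <-> \forall k \near U, ~ P k.
Proof.
split=> [nP|nP P']; first by case: (in_ultra_setVsetC P U_ultra).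
by apply: (@filter_const _ U _ False); apply: filterS2 nP P' => k.
Qed.

Section Ultrapower.
Variables (F : realFieldType) (U : set_system nat).
Context {U_ultra : UltraFilter U}.

Definition ultra_null (f : nat -> F) : bool := `[< \forall k \near U, f k = 0 >].

Lemma ultra_null_idealr_closed : idealr_closed ultra_null.
Proof.
split.
- by apply/asboolP; apply: nearW.
- by apply/negP => /asboolP /filter_ex [k /eqP]; rewrite oner_eq0.
- move=> a f g /asboolP f0 /asboolP g0; apply/asboolP.
  by apply: filterS2 f0 g0 => k fk gk; rewrite !fctE fk gk mulr0 addr0.
Qed.

HB.instance Definition _ :=
  isIdealr.Build (nat -> F) ultra_null ultra_null_idealr_closed.

Definition ultrapower := {ideal_quot (ultra_null : idealr (nat -> F))}.
HB.instance Definition _ := GRing.ComNzRing.on ultrapower.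
HB.instance Definition _ := Quotient.on ultrapower.

Lemma pi_eqP (f g : nat -> F) :
  \pi_ultrapower f = \pi_ultrapower g <-> \forall k \near U, f k = g k.
Proof.
rewrite (rwP eqP) piE /= Quotient.equivE unfold_in -(rwP (asboolP _)).
rewrite (eq_near (Q := fun k => f k = g k)) // => k.
by rewrite !fctE (rwP eqP) subr_eq0; split=> /eqP.
Qed.

Lemma near_repr (f : nat -> F) : \forall k \near U, repr (\pi_ultrapower f) k = f k.
Proof. by apply/pi_eqP; rewrite reprK. Qed.

Lemma pi0 : \pi_ultrapower (fun=> 0) = 0. Proof. by rewrite piE. Qed.
Lemma pi1 : \pi_ultrapower (fun=> 1) = 1. Proof. by rewrite piE. Qed.
Lemma piD (f g : nat -> F) :
  \pi_ultrapower f + \pi_ultrapower g = \pi_ultrapower (fun k => f k + g k).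
Proof. by rewrite piE. Qed.
Lemma piN (f : nat -> F) : - \pi_ultrapower f = \pi_ultrapower (fun k => - f k).
Proof. by rewrite piE. Qed.
Lemma piM (f g : nat -> F) :
  \pi_ultrapower f * \pi_ultrapower g = \pi_ultrapower (fun k => f k * g k).
Proof. by rewrite piE. Qed.

Lemma near_repr2 (f g : nat -> F) (R : F -> F -> Prop) :
  (\forall k \near U, R (repr (\pi_ultrapower f) k) (repr (\pi_ultrapower g) k)) <->
  \forall k \near U, R (f k) (g k).
Proof.
by split; apply: filterS3 (near_repr f) (near_repr g) => k -> ->.
Qed.

Definition ultra_inv (x : ultrapower) : ultrapower :=
  \pi_ultrapower (fun k => (repr x k)^-1).

Lemma piV (f : nat -> F) :
  ultra_inv (\pi_ultrapower f) = \pi_ultrapower (fun k => (f k)^-1).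
Proof. by apply/pi_eqP; apply: filterS (near_repr f) => k ->. Qed.

Lemma ultra_mulVf (x : ultrapower) : x != 0 -> ultra_inv x * x = 1.
Proof.
elim/quotW: x => f; rewrite -pi0 piV piM -pi1.
move=> /eqP /pi_eqP /(iffLR (ultra_nearN _)) f_neq0.
by apply/pi_eqP; apply: filterS f_neq0 => k /eqP; apply: mulVf.
Qed.

Lemma ultra_inv0 : ultra_inv 0 = 0.
Proof. by rewrite -pi0 piV invr0. Qed.

HB.instance Definition _ :=
  GRing.ComNzRing_isField.Build ultrapower ultra_mulVf ultra_inv0.

Definition ultra_le (x y : ultrapower) : bool :=
  `[< \forall k \near U, repr x k <= repr y k >].
Definition ultra_lt (x y : ultrapower) : bool :=
  `[< \forall k \near U, repr x k < repr y k >].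
Definition ultra_norm (x : ultrapower) : ultrapower :=
  \pi_ultrapower (fun k => `|repr x k|).

Lemma pi_leP (f g : nat -> F) :
  reflect (\forall k \near U, f k <= g k)
          (ultra_le (\pi_ultrapower f) (\pi_ultrapower g)).
Proof. exact: (equivP (asboolP _) (near_repr2 f g (<=%O))). Qed.

Lemma pi_ltP (f g : nat -> F) :
  reflect (\forall k \near U, f k < g k)
          (ultra_lt (\pi_ultrapower f) (\pi_ultrapower g)).
Proof. exact: (equivP (asboolP _) (near_repr2 f g (<%O))). Qed.

Lemma pi_norm (f : nat -> F) :
  ultra_norm (\pi_ultrapower f) = \pi_ultrapower (fun k => `|f k|).
Proof. by apply/pi_eqP; apply: filterS (near_repr f) => k ->. Qed.

Lemma ultra_le0_add (x y : ultrapower) :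
  ultra_le 0 x -> ultra_le 0 y -> ultra_le 0 (x + y).
Proof.
elim/quotW: x => f; elim/quotW: y => g; rewrite -pi0 piD.
move=> /pi_leP f_ge0 /pi_leP g_ge0; apply/pi_leP.
by apply: filterS2 f_ge0 g_ge0 => k; apply: addr_ge0.
Qed.

Lemma ultra_le0_mul (x y : ultrapower) :
  ultra_le 0 x -> ultra_le 0 y -> ultra_le 0 (x * y).
Proof.
elim/quotW: x => f; elim/quotW: y => g; rewrite -pi0 piM.
move=> /pi_leP f_ge0 /pi_leP g_ge0; apply/pi_leP.
by apply: filterS2 f_ge0 g_ge0 => k; apply: mulr_ge0.
Qed.

Lemma ultra_le0_anti (x : ultrapower) : ultra_le 0 x -> ultra_le x 0 -> x = 0.
Proof.
elim/quotW: x => f; rewrite -pi0 => /pi_leP f_ge0 /pi_leP f_le0; apply/pi_eqP.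
by apply: filterS2 f_ge0 f_le0 => k ge0 le0; apply/eqP; rewrite eq_le ge0 le0.
Qed.

Lemma ultra_sub_ge0 (x y : ultrapower) : ultra_le 0 (y - x) = ultra_le x y.
Proof.
elim/quotW: x => f; elim/quotW: y => g; rewrite -pi0 piN piD.
by apply/pi_leP/pi_leP; apply: filterS => k; rewrite subr_ge0.
Qed.

Lemma ultra_le0_total (x : ultrapower) : ultra_le 0 x || ultra_le x 0.
Proof.
elim/quotW: x => f; rewrite -pi0.
case: (in_ultra_setVsetC (fun k => 0 <= f k) U_ultra) => [f_ge0|f_nge0].
  by apply/orP; left; apply/pi_leP.
apply/orP; right; apply/pi_leP; apply: filterS f_nge0 => k /negP.
by rewrite -ltNge => /ltW.
Qed.

Lemma ultra_normN (x : ultrapower) : ultra_norm (- x) = ultra_norm x.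
Proof.
by elim/quotW: x => f; rewrite piN !pi_norm; under eq_fun do rewrite normrN.
Qed.

Lemma ultra_ge0_norm (x : ultrapower) : ultra_le 0 x -> ultra_norm x = x.
Proof.
elim/quotW: x => f; rewrite -pi0 pi_norm => /pi_leP f_ge0; apply/pi_eqP.
by apply: filterS f_ge0 => k /ger0_norm.
Qed.

Lemma ultra_lt_def (x y : ultrapower) : ultra_lt x y = (y != x) && ultra_le x y.
Proof.
elim/quotW: x => f; elim/quotW: y => g.
apply/pi_ltP/andP => [f_lt_g|[g_neq_f /pi_leP f_le_g]].
  split; last by apply/pi_leP; apply: filterS f_lt_g => k /ltW.
  apply/eqP => /pi_eqP g_eq_f; apply: (@filter_const _ U _ False).
  by apply: filterS2 f_lt_g g_eq_f => k; rewrite lt_def => /andP[/eqP].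
have /(iffLR (ultra_nearN _)) : ~ \forall k \near U, g k = f k.
  by move=> /pi_eqP; apply/eqP.
by apply: filterS2 f_le_g => k le_fg neq_gf; rewrite lt_def le_fg andbT; apply/eqP.
Qed.

HB.instance Definition _ := Num.IntegralDomain_isLeReal.Build ultrapower
  ultra_le0_add ultra_le0_mul ultra_le0_anti ultra_sub_ge0 ultra_le0_total
  ultra_normN ultra_ge0_norm ultra_lt_def.

Lemma pi_eval_term (e : nat -> nat -> F) (t : term) :
  eval_term (fun i => \pi_ultrapower (e i)) t =
  \pi_ultrapower (fun k => eval_term (fun i => e i k) t).
Proof.
elim: t => [i||| s IHs t IHt | s IHs | s IHs t IHt] /=.
- by [].
- by rewrite pi0.
- by rewrite pi1.
- by rewrite IHs IHt piD.
- by rewrite IHs piN.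
- by rewrite IHs IHt piM.
Qed.

Lemma upd_pi (e : nat -> nat -> F) j (f : nat -> F) :
  upd (fun i => \pi_ultrapower (e i)) j (\pi_ultrapower f) =
  fun i => \pi_ultrapower (upd e j f i).
Proof. by apply: funext => i; rewrite /upd; case: (i == j). Qed.

Lemma upd_apply (T : Type) (e : nat -> nat -> T) j (f : nat -> T) k :
  (fun i => upd e j f i k) = upd (fun i => e i k) j (f k).
Proof. by apply: funext => i; rewrite /upd; case: (i == j). Qed.

Lemma holds_pi (phi : formula) (e : nat -> nat -> F) :
  holds (fun i => \pi_ultrapower (e i)) phi <->
  \forall k \near U, holds (fun i => e i k) phi.
Proof.
elim: phi e => [s t | s t | phi IH | phi IHphi psi IHpsi | j phi IH] e /=.
- by rewrite !pi_eval_term; apply: pi_eqP.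
- by rewrite !pi_eval_term; split => /pi_ltP.
- by rewrite IH; apply: ultra_nearN.
- by rewrite IHphi IHpsi near_andP.
split=> [[a]|witnessed].
  rewrite -[a]reprK upd_pi IH; apply: filterS => k.
  by rewrite upd_apply; exists (repr a k).
exists (\pi_ultrapower
  (fun k => xget 0 (fun a => holds (upd (fun i => e i k) j a) phi))).
rewrite upd_pi IH; apply: filterS witnessed => k /xgetPex.
by rewrite upd_apply.
Qed.

Definition ultra_diag (a : F) : ultrapower := \pi_ultrapower (fun=> a).

Lemma ultra_diag_elementary : elementary ultra_diag.
Proof.
move=> phi e; rewrite [holds (ultra_diag \o e) _](holds_pi phi (fun i _ => e i)).
by split=> [phi_e|/filter_const]; first exact: nearW.
Qed.

Lemma sat1_pi (x : nat -> F) (phi : formula) (e : nat -> nat -> F) :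
  sat1 (\pi_ultrapower x) (phi, fun i => \pi_ultrapower (e i)) <->
  \forall k \near U, sat1 (x k) (phi, fun i => e i k).
Proof. by rewrite /sat1 /= upd_pi holds_pi; under eq_near do rewrite upd_apply. Qed.
End Ultrapower.

Arguments ultrapower F U {U_ultra}.
Arguments ultra_diag {F U U_ultra}.

Section PowerClasses.
Variables (K : realFieldType) (c : K) (n : nat).
Hypotheses (c_gt0 : 0 < c) (n_gt0 : (0 < n)%N).
Hypothesis c_not_exprn : forall v : K, v ^+ n != c.

Lemma power_class_expnD (x y : K) a d :
  x ^+ (n ^ (a + d)) * y ^+ (n ^ (a + d).+1) =
  (x ^+ (n ^ d) * y ^+ (n ^ d.+1)) ^+ (n ^ a).
Proof. by rewrite exprMn -!exprM -addnS !expnD !(mulnC (n ^ a)%N). Qed.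

Lemma power_class_lt i d (y z : K) : y != 0 ->
  c ^+ (n ^ i) * y ^+ (n ^ i.+1) != c ^+ (n ^ (i + d.+1)) * z ^+ (n ^ (i + d.+1).+1).
Proof.
move=> y_neq0; apply/eqP.
rewrite -[in LHS](addn0 i) !power_class_expnD expn0 expn1 expr1.
set w := c ^+ (n ^ d) * z ^+ (n ^ d.+1).
have -> : c ^+ (n ^ d.+1) * z ^+ (n ^ d.+2) = w ^+ n.
  by rewrite exprMn -!exprM -!expnSr.
move=> /(congr1 Num.norm); rewrite normrX [RHS]normrX => /eqP.
rewrite eqrXn2 ?expn_gt0 ?n_gt0 // normrM !normrX (gtr0_norm c_gt0) => /eqP cyw.
have : (`|w| / `|y|) ^+ n = c.
  by rewrite exprMn exprVn -cyw mulfK // expf_neq0 // normr_eq0.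
by apply/eqP.
Qed.

Lemma power_class_inj i j (y z : K) : y != 0 ->
  c ^+ (n ^ i) * y ^+ (n ^ i.+1) = c ^+ (n ^ j) * z ^+ (n ^ j.+1) -> i = j.
Proof.
move=> y_neq0 yz; have z_neq0 : z != 0.
  apply/eqP => z0; move/eqP: yz; rewrite z0 expr0n expn_eq0 gtn_eqF // mulr0.
  by rewrite mulf_eq0 !expf_eq0 (negbTE y_neq0) gt_eqF ?andbF.
case: (ltngtP i j) => // [ij|ji]; [move/eqP: yz | move/esym/eqP: yz].
  by rewrite -(subnKC ij) addSn -addnS (negbTE (power_class_lt _ _ _ y_neq0)).
by rewrite -(subnKC ji) addSn -addnS (negbTE (power_class_lt _ _ _ z_neq0)).
Qed.

End PowerClasses.

Lemma exponent_window_hit (m L a k : nat) : (0 < L)%N -> (m + L < k)%N ->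
  (a * k < m + (a * k %/ L).+1 * L < a.+1 * k)%N.
Proof.
move=> L_gt0 k_large; have := divn_eq (a * k) L; have := ltn_pmod (a * k) L_gt0.
set q := (a * k %/ L)%N; set r := (a * k %% L)%N; lia.
Qed.

Lemma exponent_windows_disjoint (j j' k e : nat) :
  (2 * j * k < e < (2 * j).+1 * k)%N -> (2 * j' * k < e < (2 * j').+1 * k)%N ->
  j = j'.
Proof. nia. Qed.

Fixpoint tpow (t : term) (m : nat) : term :=
  if m is m.+1 then TMul (tpow t m) t else TOne.

Lemma eval_tpow (K : realFieldType) (e : nat -> K) t m :
  eval_term e (tpow t m) = eval_term e t ^+ m.
Proof. by elim: m => [|m IH] //=; rewrite IH exprSr. Qed.

Definition coset_formula (M : nat) : formula :=
  FEx 1 (FEq (TVar 0) (TMul (TVar 2) (tpow (TVar 1) M))).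

Definition interval_formula : formula :=
  FAnd (FLt (TVar 1) (TVar 0)) (FLt (TVar 0) (TVar 2)).

Lemma sat1_coset_formula (K : realFieldType) (x : K) (e : nat -> K) M :
  sat1 x (coset_formula M, e) <-> exists y, x = e 2%N * y ^+ M.
Proof.
by rewrite /sat1 /= /upd /=; split=> -[y yE]; exists y; rewrite eval_tpow in yE *.
Qed.

Section DpPattern.
Variables (F : realFieldType) (U : set_system nat).
Context {U_ultra : UltraFilter U}.
Hypothesis U_free : (\oo `<=` U)%classic.
Variables (c : F) (n : nat).
Hypotheses (n_gt0 : (0 < n)%N) (c_gt1 : 1 < c).
Hypothesis c_not_exprn : forall v : F, v ^+ n != c.

Let c_gt0 : 0 < c. Proof. exact: lt_trans ltr01 c_gt1. Qed.
Let expn_n_gt0 m : (0 < n ^ m)%N. Proof. by rewrite expn_gt0 n_gt0. Qed.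

Definition coset_lk (i : nat) : lkformula (ultrapower F U) :=
  (coset_formula (n ^ i.+1), fun=> \pi_(ultrapower F U) (fun=> c ^+ (n ^ i))).

(* Parameter 1 of [interval_formula] is the lower end, every other one the upper end. *)
Definition window_ends (j k : nat) : nat -> F :=
  fun v => c ^+ (if v == 1%N then 2 * j * k else (2 * j).+1 * k)%N.

Definition window (j : nat) : nat -> ultrapower F U :=
  fun v => \pi_(ultrapower F U) (fun k => window_ends j k v).

(* Congruent to n^i mod n^(i+1) and just above 2jk, so that c to this power lies
   in the i-th coset and, for large k, in the j-th window. *)
Definition witness_exponent (i j k : nat) : nat :=
  n ^ i + ((2 * j * k) %/ n ^ i.+1).+1 * n ^ i.+1.

Lemma witness_in_coset i j k :
  sat1 (c ^+ witness_exponent i j k) (coset_formula (n ^ i.+1), fun=> c ^+ (n ^ i)).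
Proof.
apply/sat1_coset_formula; exists (c ^+ ((2 * j * k) %/ n ^ i.+1).+1).
by rewrite -exprM exprD.
Qed.

Lemma witness_notin_coset i i' j k : i' != i ->
  ~ sat1 (c ^+ witness_exponent i j k) (coset_formula (n ^ i'.+1), fun=> c ^+ (n ^ i')).
Proof.
move=> /eqP ne /sat1_coset_formula [y] /= wy; apply: ne; apply/esym.
have c_neq0 : c ^+ ((2 * j * k) %/ n ^ i.+1).+1 != 0 by rewrite expf_neq0 // gt_eqF.
apply: (power_class_inj (z := y) c_gt0 n_gt0 c_not_exprn c_neq0).
by rewrite -wy -exprM -exprD.
Qed.

Lemma witness_in_window i j k : (n ^ i + n ^ i.+1 < k)%N ->
  sat1 (c ^+ witness_exponent i j k) (interval_formula, window_ends j k).
Proof.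
move=> k_large; rewrite /sat1 /= /upd /= /window_ends /= !ltr_eXn2l //.
by have /andP := exponent_window_hit (2 * j) (expn_n_gt0 i.+1) k_large.
Qed.

Lemma witness_notin_window i j j' k : j' != j -> (n ^ i + n ^ i.+1 < k)%N ->
  ~ sat1 (c ^+ witness_exponent i j k) (interval_formula, window_ends j' k).
Proof.
move=> /eqP ne k_large.
rewrite /sat1 /= /upd /= /window_ends /= !ltr_eXn2l // => -[lo hi].
have /andP[lo' hi'] := exponent_window_hit (2 * j) (expn_n_gt0 i.+1) k_large.
apply: ne; apply: (exponent_windows_disjoint (k := k) (e := witness_exponent i j k)).
  by rewrite lo hi.
by rewrite lo' hi'.
Qed.

Lemma ultrapower_dp_pattern :
  exists (phi : nat -> lkformula (ultrapower F U)) (psi : formula)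
         (b : nat -> nat -> ultrapower F U),
    forall i0 j0 : nat, consistent (dp_pattern_type phi psi b i0 j0).
Proof.
exists coset_lk, interval_formula, window => i0 j0.
exists (ultrapower F U), id; split=> //.
exists (\pi_(ultrapower F U) (fun k => c ^+ witness_exponent i0 j0 k)).
have k_large : \forall k \near U, (n ^ i0 + n ^ i0.+1 < k)%N.
  by apply: U_free; exists (n ^ i0 + n ^ i0.+1).+1.
move=> _ [->|[->|[[i [/eqP ne ->]]|[j [/eqP ne ->]]]]]; apply/sat1_pi.
- by apply: nearW => k; apply: witness_in_coset.
- by apply: filterS k_large => k; apply: witness_in_window.
- by apply: nearW => k; apply: witness_notin_coset.
- by apply: filterS k_large => k; apply: witness_notin_window.
Qed.

End DpPattern.

Lemma not_dp_small_of_nonpower (F : realFieldType) (c : F) (n : nat) :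
  (0 < n)%N -> 1 < c -> (forall v : F, v ^+ n != c) -> ~ dp_small F.
Proof.
move=> n_gt0 c_gt1 c_not_exprn; apply.
have [U [U_ultra U_free]] := ultraFilterLemma eventually_filter.
exists (ultrapower F U), ultra_diag; split; first exact: ultra_diag_elementary.
exact: (@ultrapower_dp_pattern F U U_ultra U_free c n n_gt0 c_gt1 c_not_exprn).
Qed.

Lemma dp_small_exists_root (F : realFieldType) (n : nat) (x : F) :
  dp_small F -> (0 < n)%N -> 0 < x -> exists v, v ^+ n = x.
Proof.
move=> F_small n_gt0 x_gt0.
suff root_gt1 : forall y : F, 1 < y -> exists v : F, v ^+ n = y.
  case: (ltrgtP x 1) => [x_lt1|/root_gt1 //|->]; last by exists 1; rewrite expr1n.
  have [|v vE] := root_gt1 x^-1; first by rewrite invf_gt1.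
  by exists v^-1; rewrite exprVn vE invrK.
move=> y y_gt1; apply: contrapT => no_root.
apply: (not_dp_small_of_nonpower n_gt0 y_gt1 _ F_small) => v.
by apply/eqP => vE; apply: no_root; exists v.
Qed.

Lemma arch_val_eq_normr (F : realFieldType) (a : F) : a != 0 -> arch_val_eq `|a| a.
Proof.
move=> a_neq0; have unit_finite x : `|x| = 1 -> arch_finite x.
  by move=> x1; exists 2%N; rewrite x1 ltr1n.
have na_neq0 : `|a| != 0 by rewrite normr_eq0.
by split; apply: unit_finite; rewrite normrM normrV ?unitfE // normr_id divff.
Qed.

Theorem lemma3p10 (F : realFieldType) (hF : dp_small F) :
  forall (a : F) (n : nat), a != 0 -> (0 < n)%N ->
    exists b : F, b != 0 /\ arch_val_eq (b ^+ n) a.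
Proof.
move=> a n a_neq0 n_gt0.
have [b bE] : exists b, b ^+ n = `|a|.
  by apply: dp_small_exists_root; rewrite ?normr_gt0.
exists b; split; last by rewrite bE; apply: arch_val_eq_normr.
by apply: contra_neq a_neq0 => b0; apply/normr0_eq0; rewrite -bE b0 expr0n gtn_eqF.
Qed.
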